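(* Let $\Omega=\{1,\dots,m\}^{\mathbb{N}}$, let $\mathcal{M}$ be the set of Borel probabilities on $\Omega$ with the Monge–Kantorovich metric $d_{MK}$, and let $R:\Omega\times\Omega\to\Omega$ be continuous and $s$-Lipschitz in the second variable, i.e. $d_\Omega(R(x,y),R(x,y'))\le s\,d_\Omega(y,y')$ for all $x,y,y'\in\Omega$. Let $*$ be the convolution associated to $R$. Then for each fixed $\eta\in\mathcal{M}$, the map $\mu\mapsto\eta*\mu$ is $s$-Lipschitz with respect to $d_{MK}$: $d_{MK}(\eta*\mu,\eta*\mu')\le s\,d_{MK}(\mu,\mu')$ for all $\mu,\mu'\in\mathcal{M}$.
   Context: $d_\Omega(\alpha,\beta)=2^{-k}$ with $k=\min\{i:\alpha_i\neq\beta_i\}$ (and $0$ if $\alpha=\beta$); $d_{MK}(\mu,\nu)=\sup\{\int f\,d\mu-\int f\,d\nu : f \text{ 1-Lipschitz}\}$. The convolution associated to $R$ is defined for $\nu,\mu\in\mathcal{M}$ by $(\nu*\mu)(E)=(\nu\times\mu)(R^{-1}(E))$, i.e. $\int_\Omega f\,d(\nu*\mu)=\int\int f(R(x,y))\,d\nu(x)\,d\mu(y)$ for all continuous $f:\Omega\to\mathbb{R}$. *)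

From HB Require Import structures.
From mathcomp Require Import all_boot all_order all_algebra.
From mathcomp Require Import all_classical all_reals all_analysis.
Set Implicit Arguments. Unset Strict Implicit. Unset Printing Implicit Defensive.
Import Order.TTheory GRing.Theory Num.Theory.
Import numFieldNormedType.Exports.
Local Open Scope classical_set_scope.
Local Open Scope ring_scope.

(* Alphabet {1,...,m} is represented by 'I_m (with m >= 1, written m.+1).
   Omega m = {1..m.+1}^N, the one-sided full shift. *)
Definition Omega (m : nat) := nat -> 'I_m.+1.
HB.instance Definition _ m := gen_eqMixin (Omega m).
HB.instance Definition _ m := gen_choiceMixin (Omega m).
HB.instance Definition _ m := isPointed.Build (Omega m) (fun _ => ord0).

Section Defs.
Context {R : realType} {m : nat}.

Definition dOm (a b : Omega m) : R :=
  match pselect (exists i, a i != b i) with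
  | left H => 2 ^- (ex_minn H)
  | right _ => 0
  end.

Definition OpenOm : set (set (Omega m)) :=
  [set U | forall x, U x -> exists2 e : R, 0 < e &
             forall y, dOm x y < e -> U y].
End Defs.

Notation BOmega R m := (g_sigma_algebraType (@OpenOm R m)).

Section Defs2.
Context {R : realType} {m : nat}.
Local Notation B := (BOmega R m).

Definition lip1 (f : B -> R) : Prop :=
  forall a b : B, `|f a - f b| <= dOm a b.

Definition dMK (mu nu : probability B R) : R :=
  sup [set r : R | exists2 f : B -> R, lip1 f &
         r = (\int[mu]_x f x) - (\int[nu]_x f x)].

Definition contOm2 (R0 : B -> B -> B) : Prop :=
  forall (x y : B) (e : R), 0 < e -> exists2 d : R, 0 < d &
    forall x' y' : B, dOm x x' < d -> dOm y y' < d ->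
      dOm (R0 x y) (R0 x' y') < e.

Definition is_conv (R0 : B -> B -> B) (nu mu : probability B R)
    (rho : probability B R) : Prop :=
  forall E : set B, measurable E ->
    rho E = (nu \x mu)%E ((fun p : B * B => R0 p.1 p.2) @^-1` E).
End Defs2.

From HB Require Import structures.
From mathcomp Require Import all_boot all_order all_algebra.
From mathcomp Require Import all_classical all_reals all_analysis.
From mathcomp Require Import lra measurable_realfun.
Import Order.TTheory GRing.Theory Num.Theory.
Import numFieldNormedType.Exports.
Local Open Scope classical_set_scope.
Local Open Scope ring_scope.
Set Implicit Arguments. Unset Strict Implicit.

(* Testing d_MK(eta * mu, eta * mu') against a 1-Lipschitz f, Fubini turns
   int f d(eta * mu) into int eta(dx) int f(R(x,y)) mu(dy).  For fixed x the
   function y |-> f(R(x,y)) is s-Lipschitz, so the difference of the inner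
   integrals for mu and mu' is at most s d_MK(mu, mu'), and integrating against
   the probability eta keeps this bound.  The measure-theoretic point is that
   (x,y) |-> R(x,y) is measurable for the product sigma-algebra: by continuity
   the preimage of an open set is a countable union of sets depending only on
   finitely many coordinates, i.e. of finite unions of products of cylinders. *)

Section shift_metric.
Context {R : realType} {m : nat}.
Implicit Types a b c : Omega m.

Definition prefix_eq n a b := forall i, (i < n)%N -> a i = b i.

Lemma prefix_eq_sym n a b : prefix_eq n a b -> prefix_eq n b a.
Proof. by move=> ab i ilt; rewrite ab. Qed.

Lemma prefix_eq_trans n a b c : prefix_eq n a b -> prefix_eq n b c -> prefix_eq n a c.
Proof. by move=> ab bc i ilt; rewrite ab // bc. Qed.

Lemma dOm_ge0 a b : 0 <= dOm a b :> R.
Proof. by rewrite /dOm; case: pselect => // H; exact: ltW. Qed.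

Lemma dOm_le1 a b : dOm a b <= 1 :> R.
Proof.
rewrite /dOm; case: pselect => // H.
by rewrite invf_le1 ?exprn_gt0 // exprn_ege1 // ler1n.
Qed.

Lemma dOm_eq0 a b : dOm a b = 0 :> R -> a = b.
Proof.
rewrite /dOm; case: pselect => [H|ab _].
  by move/eqP; rewrite invr_eq0 expf_eq0 pnatr_eq0 andbF.
by apply: funext => i; apply/eqP; apply: contra_notT ab; exists i.
Qed.

Lemma prefix_eq_dOm n a b : prefix_eq n a b -> dOm a b <= 2 ^- n :> R.
Proof.
move=> ab; rewrite /dOm; case: pselect => [H|_]; last by rewrite invr_ge0 exprn_ge0.
case: ex_minnP => k abk _.
have nk : (n <= k)%N by rewrite leqNgt; apply: contraL abk => /ab ->; rewrite eqxx.
by rewrite lef_pV2 ?posrE ?exprn_gt0 // ler_eXn2l // ltr1n.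
Qed.

Lemma dOm_prefix_eq n a b : dOm a b < 2 ^- n :> R -> prefix_eq n a b.
Proof.
move=> abn i ilt; apply/eqP; apply: contraLR abn => abi.
rewrite -leNgt /dOm; case: pselect => [H|]; last by case; exists i.
case: ex_minnP => k _ /(_ _ abi) ki.
rewrite lef_pV2 ?posrE ?exprn_gt0 // ler_eXn2l ?ltr1n //.
exact: ltnW (leq_ltn_trans ki ilt).
Qed.

End shift_metric.

Section shift_measurability.
Context {R : realType} {m : nat}.
Local Notation B := (BOmega R m).

Lemma OpenOm_measurable (U : set B) : OpenOm (R:=R) U -> measurable U.
Proof. exact: sub_sigma_algebra. Qed.

Lemma lip1_measurable (f : B -> R) : lip1 f -> measurable_fun setT f.
Proof.
move=> lf; apply: (measurability _ (RGenOpens.measurableE R)).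
move=> _ [_ [a [b ->]] <-]; rewrite setTI; apply: OpenOm_measurable => x /=.
rewrite in_itv /= => /andP[ax xb].
exists (Num.min (f x - a) (b - f x)); first by rewrite lt_min !subr_gt0 ax xb.
move=> y; rewrite lt_min in_itv /= => /andP[ya yb].
by have := lf x y; rewrite ler_norml => /andP[? ?]; apply/andP; split; lra.
Qed.

Definition cylinder n (a : B) : set B := [set x | prefix_eq n a x].

Lemma cylinder_measurable n a : measurable (cylinder n a).
Proof.
apply: OpenOm_measurable => x ax; exists (2 ^- n : R); first by rewrite invr_gt0 exprn_gt0.
by move=> y /dOm_prefix_eq xy; apply: prefix_eq_trans ax xy.
Qed.

Definition prefix n (x : B) : {ffun 'I_n -> 'I_m.+1} := [ffun j => x (val j)].

Definition pad n (w : {ffun 'I_n -> 'I_m.+1}) : B := fun i => oapp w ord0 (insub i).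

Lemma prefix_eq_pad_prefix n x : prefix_eq n (pad (prefix n x)) x.
Proof.
move=> i ilt; rewrite /pad; case: insubP => [j _ <-|]; last by rewrite ilt.
by rewrite /= ffunE.
Qed.

Lemma prefix_determined_measurable n (W : set (B * B)) :
  (forall p q, W p -> prefix_eq n p.1 q.1 -> prefix_eq n p.2 q.2 -> W q) ->
  measurable W.
Proof.
move=> detW; pose T := ({ffun 'I_n -> 'I_m.+1} * {ffun 'I_n -> 'I_m.+1})%type.
have -> : W = \bigcup_(w in [set w : T | W (pad w.1, pad w.2)])
                (cylinder n (pad w.1) `*` cylinder n (pad w.2)).
  apply/seteqP; split => [[x y] Wxy|[x y] [w /= Ww [/= xw yw]]].
    exists (prefix n x, prefix n y); last by split; exact: prefix_eq_pad_prefix.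
    by apply: detW Wxy _ _; exact/prefix_eq_sym/prefix_eq_pad_prefix.
  exact: (detW (pad w.1, pad w.2) (x, y)).
apply: fin_bigcup_measurable; first exact: finite_finset.
by move=> w _; apply: measurableX; exact: cylinder_measurable.
Qed.

Lemma contOm2_measurable (R0 : B -> B -> B) :
  contOm2 R0 -> measurable_fun setT (fun p : B * B => R0 p.1 p.2).
Proof.
move=> cR; apply: (@measurability _ _ _ B setT _ (@OpenOm R m : set (set B))) => //.
move=> _ [U oU <-]; rewrite setTI.
pose W n := [set p : B * B | forall q : B * B,
  prefix_eq n p.1 q.1 -> prefix_eq n p.2 q.2 -> U (R0 q.1 q.2)].
have -> : (fun p : B * B => R0 p.1 p.2) @^-1` U = \bigcup_n W n.
  apply/seteqP; split => [[x y] /= Uxy|[x y] [n _ Wn]]; last exact: Wn.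
  have [e e0 /(_ _) Ue] := oU _ Uxy.
  have [d d0 dR] := cR x y e e0.
  have [n _ /(_ n (leqnn n)) nd] := near_infty_natSinv_expn_lt (PosNum d0).
  rewrite div1r /= in nd.
  exists n => // -[x' y'] /= xx' yy'; apply/Ue/dR.
    exact: le_lt_trans (prefix_eq_dOm xx') nd.
  exact: le_lt_trans (prefix_eq_dOm yy') nd.
apply: bigcupT_measurable => n; apply: (@prefix_determined_measurable n).
move=> p q Wp pq1 pq2 r qr1 qr2.
by apply: Wp; [exact: prefix_eq_trans pq1 qr1|exact: prefix_eq_trans pq2 qr2].
Qed.

End shift_measurability.

Section probability_integrals.
Context {R : realType} d (T : measurableType d) (P : probability T R).

Lemma probability_Rintegral_cst (c : R) : \int[P]_x c = c.
Proof. by rewrite Rintegral_cst // (_ : fine (P setT) = 1) ?mulr1 // probability_setT. Qed.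

Lemma bounded_integrable (f : T -> R) (M : R) :
  measurable_fun setT f -> (forall x, `|f x| <= M) -> P.-integrable setT (EFin \o f).
Proof.
move=> mf fM; apply: measurable_bounded_integrable => //.
  exact: le_lt_trans (probability_le1 P measurableT) (ltey _).
exists M; split; first exact: num_real.
by move=> M' MM' x _; exact: le_trans (fM x) (ltW MM').
Qed.

End probability_integrals.

Section pushforward_of_product.
Context {R : realType} {d1 d2 d3 : measure_display}.
Context {X : measurableType d1} {Y : measurableType d2} {Z : measurableType d3}.
Variables (eta : probability X R) (mu : probability Y R) (rho : probability Z R).
Variable phi : X * Y -> Z.
Hypothesis mphi : measurable_fun setT phi.
Hypothesis rhoE : forall E, measurable E -> rho E = (eta \x mu)%E (phi @^-1` E).
Variables (f : Z -> R) (M : R).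
Hypotheses (mf : measurable_fun setT f) (fM : forall z, `|f z| <= M).

Let integrable_comp_phi : (eta \x mu)%E.-integrable setT (EFin \o (f \o phi)).
Proof. exact: bounded_integrable (measurableT_comp mf mphi) (fun p => fM (phi p)). Qed.

Let fubini_F_section x :
  fubini_F mu (EFin \o (f \o phi)) x = (\int[mu]_y f (phi (x, y)))%:E.
Proof.
have mfx : measurable_fun setT (fun y => f (phi (x, y))).
  exact: measurableT_comp mf (measurable_fun_pair2 x mphi).
rewrite /fubini_F /Rintegral fineK //; apply: integrable_fin_num => //.
exact: bounded_integrable mfx (fun y => fM (phi (x, y))).
Qed.

Lemma integrable_Rintegral_section :
  eta.-integrable setT (EFin \o fun x => \int[mu]_y f (phi (x, y))).
Proof.
by apply: eq_integrable (integrable_fubini_F integrable_comp_phi) => // x _.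
Qed.

Lemma Rintegral_pushforward_prod :
  \int[rho]_z f z = \int[eta]_x \int[mu]_y f (phi (x, y)).
Proof.
rewrite /Rintegral; congr fine.
rewrite (@eq_measure_integral _ _ _ setT (pushforward (eta \x mu)%E phi)); last first.
  by move=> A mA _; exact: rhoE.
have mEf : measurable_fun setT (EFin \o f) by exact/measurable_EFinP.
rewrite (integral_pushforward mphi mEf); [|by rewrite preimage_setT|exact: measurableT].
rewrite preimage_setT -(integral12_prod_meas1 integrable_comp_phi).
by apply: eq_integral => x _; rewrite fubini_F_section.
Qed.

End pushforward_of_product.

Section Monge_Kantorovich.
Context {R : realType} {m : nat}.
Local Notation B := (BOmega R m).
Implicit Types (mu nu : probability B R) (f : B -> R).

Lemma lip1_bounded f : lip1 f -> forall x, `|f x| <= `|f point| + 1.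
Proof.
move=> lf x; rewrite -[f x](subrK (f point)) addrC.
apply: le_trans (ler_normD _ _) _; rewrite lerD2l.
exact: le_trans (lf x point) (dOm_le1 _ _).
Qed.

Lemma lip1_integrable mu f : lip1 f -> mu.-integrable setT (EFin \o f).
Proof. by move=> lf; exact: bounded_integrable (lip1_measurable lf) (lip1_bounded lf). Qed.

Lemma Rintegral_diff_cst mu nu f c :
  (forall x, f x = c) -> \int[mu]_x f x - \int[nu]_x f x = 0.
Proof.
move=> fc; rewrite !(eq_Rintegral _ (fun x _ => fc x)).
by rewrite !probability_Rintegral_cst subrr.
Qed.

Lemma lip1_Rintegral_near_point mu f : lip1 f ->
  f point - 1 <= \int[mu]_x f x <= f point + 1.
Proof.
move=> lf; have near x : f point - 1 <= f x <= f point + 1.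
  by have := lf x point; have := dOm_le1 (R:=R) x point; rewrite ler_norml; lra.
have icst c : mu.-integrable setT (EFin \o fun=> c).
  exact: (@bounded_integrable _ _ _ _ _ `|c|).
apply/andP; split.
  rewrite -[leLHS](probability_Rintegral_cst mu).
  by apply: le_Rintegral => //; [exact: lip1_integrable|move=> x _; case/andP: (near x)].
rewrite -[leRHS](probability_Rintegral_cst mu).
by apply: le_Rintegral => //; [exact: lip1_integrable|move=> x _; case/andP: (near x)].
Qed.

Lemma lip1_le_dMK mu nu f : lip1 f -> \int[mu]_x f x - \int[nu]_x f x <= dMK mu nu.
Proof.
move=> lf; apply: ub_le_sup; last by exists f.
exists 2 => _ [g lg ->].
by have := lip1_Rintegral_near_point mu lg; have := lip1_Rintegral_near_point nu lg; lra.
Qed.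

Lemma dMK_le mu nu (c : R) :
  (forall f, lip1 f -> \int[mu]_x f x - \int[nu]_x f x <= c) -> dMK mu nu <= c.
Proof.
move=> fc; apply: ge_sup => [|_ [f lf ->]]; last exact: fc.
exists 0, (fun=> 0); last by rewrite (@Rintegral_diff_cst _ _ _ 0).
by move=> a b; rewrite subrr normr0 dOm_ge0.
Qed.

Lemma Rintegral_lipschitz_le_dMK mu nu (k : R) (G : B -> R) :
  (forall y y', `|G y - G y'| <= k * dOm y y') ->
  \int[mu]_y G y - \int[nu]_y G y <= k * dMK mu nu.
Proof.
move=> lipG; have [k_gt0|k_le0] := ltP 0 k.
  have lipGk : lip1 (fun y => k^-1 * G y).
    by move=> a b; rewrite -mulrBr normrM gtr0_norm ?invr_gt0 // ler_pdivrMl.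
  have Gk y : G y = k * (k^-1 * G y) by rewrite mulrA mulfV ?mul1r ?gt_eqF.
  rewrite !(eq_Rintegral _ (fun y _ => Gk y)).
  rewrite !(RintegralZl k measurableT) ?lip1_integrable // -mulrBr.
  by rewrite ler_pM2l //; exact: lip1_le_dMK.
have Gc y : G y = G point.
  apply/eqP; rewrite -subr_eq0 -normr_eq0 eq_le normr_ge0 andbT.
  exact: le_trans (lipG y point) (mulr_le0_ge0 k_le0 (dOm_ge0 _ _)).
rewrite (Rintegral_diff_cst _ _ Gc).
move: k_le0; rewrite le_eqVlt => /orP[/eqP->|k_lt0]; first by rewrite mul0r.
(* A negative Lipschitz constant can only occur on a one-point space. *)
have pt_eq (y y' : B) : y = y'.
  apply: (@dOm_eq0 R); have := lipG y y'; have := normr_ge0 (G y - G y').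
  have := dOm_ge0 (R:=R) y y'; nra.
apply: mulr_le0; first exact: ltW.
apply: dMK_le => f _.
by rewrite (@Rintegral_diff_cst _ _ _ (f point)) // => y; rewrite (pt_eq y point).
Qed.

End Monge_Kantorovich.

Theorem lemma3p1 (R : realType) (m : nat) (R0 : BOmega R m -> BOmega R m -> BOmega R m)
  (s : R) :
  contOm2 R0 ->
  (forall x y y' : BOmega R m, dOm (R0 x y) (R0 x y') <= s * dOm y y') ->
  forall (eta mu mu' rho rho' : probability (BOmega R m) R),
    is_conv R0 eta mu rho -> is_conv R0 eta mu' rho' ->
    dMK rho rho' <= s * dMK mu mu'.
Proof.
move=> cR0 lipR0 eta mu mu' rho rho' rhoE rho'E.
have mR0 := contOm2_measurable cR0.
apply: dMK_le => f lf.
have [mf bf] := (lip1_measurable lf, lip1_bounded lf).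
have isec nu := integrable_Rintegral_section eta nu mR0 mf bf.
rewrite (Rintegral_pushforward_prod mR0 rhoE mf bf) (Rintegral_pushforward_prod mR0 rho'E mf bf).
rewrite -RintegralB ?isec // -[leRHS](probability_Rintegral_cst eta).
apply: le_Rintegral => //.
- by apply: eq_integrable (integrableB measurableT (isec mu) (isec mu')) => // x _.
- exact: (@bounded_integrable _ _ _ _ _ `|s * dMK mu mu'|).
move=> x _; apply: Rintegral_lipschitz_le_dMK => y y'.
exact: le_trans (lf _ _) (lipR0 x y y').
Qed.
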